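(* Let $p\ge 0$ and $n\ge 1$. A permutation $\sigma$ of $[n]$ belongs to the basis $\mathcal{B}_p$ if and only if all of the following hold: (i) $\sigma$ has exactly $p+1$ non-left-to-right-maxima; (ii) the value $n-1$ is a non-left-to-right-maximum of $\sigma$; (iii) $\sigma_2$ is a non-left-to-right-maximum of $\sigma$; (iv) for any three left-to-right maxima $\sigma_i,\sigma_j,\sigma_k$ with $i<j<k$ such that no other left-to-right maximum lies at a position strictly between $i$ and $k$, there exists a non-left-to-right-maximum $\sigma_t$ with $j<t<k$ and $\sigma_t>\sigma_i$.
   Context: Permutations of $[n]$ are written as words $\sigma=\sigma_1\cdots\sigma_n$. A right-jump transforms $\sigma$ into $\sigma_1\cdots\sigma_{i-1}\sigma_{i+1}\cdots\sigma_j\sigma_i\sigma_{j+1}\cdots\sigma_n$ for some $1\le i<j\le n$. A left-to-right maximum of $\sigma$ is an entry $\sigma_i$ such that $\sigma_k<\sigma_i$ for all $k<i$; every other entry is a non-left-to-right-maximum. A permutation $\pi$ of $[k]$ is a pattern of $\sigma$ (written $\pi\prec\sigma$) if some subsequence $\sigma_{i_1}\cdots\sigma_{i_k}$ ($i_1<\dots<i_k$) is order-isomorphic to $\pi$. $\mathcal{C}_p$ is the set of all permutations (of any length $n$) obtainable from the identity $12\cdots n$ by at most $p$ right-jumps; it is closed under taking patterns. The basis $\mathcal{B}_p$ is the set of permutations $\sigma\notin\mathcal{C}_p$ such that every pattern $\pi\prec\sigma$ with $\pi\ne\sigma$ lies in $\mathcal{C}_p$; then $\mathcal{C}_p$ is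 exactly the set of permutations avoiding every element of $\mathcal{B}_p$. *)

(* Permutations of [n] are words: seq nat that are
   permutations of [:: 1; ...; n].  Positions are 0-indexed internally. *)
From mathcomp Require Import all_boot.
Set Implicit Arguments. Unset Strict Implicit. Unset Printing Implicit Defensive.

Definition is_perm (s : seq nat) : bool := perm_eq s (iota 1 (size s)).

(* right-jump with 0-indexed positions i < j (paper's i+1 < j+1):
   s_0..s_{i-1} s_{i+1}..s_j s_i s_{j+1}..s_{n-1} *)
Definition rjump (s : seq nat) (i j : nat) : seq nat :=
  take i s ++ take (j - i) (drop i.+1 s) ++ [:: nth 0 s i] ++ drop j.+1 s.

Fixpoint jumps (k : nat) (s t : seq nat) : Prop :=
  match k with
  | 0 => s = t
  | k'.+1 => exists i j, i < j /\ j < size s /\ jumps k' (rjump s i j) t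
  end.

Definition inC (p : nat) (s : seq nat) : Prop :=
  exists k, k <= p /\ jumps k (iota 1 (size s)) s.

Definition order_iso (u v : seq nat) : Prop :=
  size u = size v /\
  forall a b, a < size u -> b < size u ->
    (nth 0 u a < nth 0 u b) = (nth 0 v a < nth 0 v b).

Definition pattern (pi s : seq nat) : Prop :=
  is_perm pi /\ exists m : bitseq, order_iso (mask m s) pi.

Definition inB (p : nat) (s : seq nat) : Prop :=
  is_perm s /\ ~ inC p s /\
  forall pi, pattern pi s -> pi <> s -> inC p pi.

Definition ltrmax (s : seq nat) (i : nat) : bool :=
  all (fun k => nth 0 s k < nth 0 s i) (iota 0 i).

Definition nonltr (s : seq nat) (i : nat) : bool :=
  (i < size s) && ~~ ltrmax s i.

From mathcomp Require Import all_boot zify.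
Set Implicit Arguments. Unset Strict Implicit. Unset Printing Implicit Defensive.

(* A right jump moves one entry to the right, which creates at most one new
   non-left-to-right maximum; conversely, moving the first non-left-to-right
   maximum back in front of the first larger entry removes one.  Hence C_p is
   the set of permutations with at most p non-left-to-right maxima.  As C_p is
   closed under patterns, sigma lies in B_p iff it has p+1 of them and each
   one-point deletion has at most p.  Deleting a non-left-to-right maximum
   always removes exactly one; deleting a left-to-right maximum d removes as
   many as there are later entries whose only larger predecessor is d (the
   shadow of d).  So sigma lies in B_p iff it has p+1 non-left-to-right maxima
   and every left-to-right maximum shadows some entry; for the first, the inner
   and the last left-to-right maximum this is condition (iii), (iv) and (ii). *)

Lemma all_iotaP (P : pred nat) l : reflect (forall k, k < l -> P k) (all P (iota 0 l)).
Proof.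
apply: (iffP allP) => h k; first by move=> kl; apply: h; rewrite mem_iota.
by rewrite mem_iota => /andP [_ kl]; apply: h.
Qed.

Lemma iota_succ m n : iota m.+1 n = map succn (iota m n).
Proof. by rewrite -add1n iotaDl. Qed.

Lemma count_split_pred (T : Type) (a b : pred T) s :
  count a s = count (predI b a) s + count (predI (predC b) a) s.
Proof. by rewrite -!count_filter count_predC size_filter. Qed.

Lemma count_leq_iota y n : y <= n -> count (fun x => x <= y) (iota 1 n) = y.
Proof.
move=> yn; rewrite -(subnKC yn) iotaD count_cat.
rewrite (eq_in_count (a2 := predT)); last by move=> x; rewrite mem_iota /=; lia.
rewrite count_predT size_iota (eq_in_count (a2 := pred0)) ?count_pred0 ?addn0 //.
by move=> x; rewrite mem_iota /=; lia.
Qed.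

Lemma ltrmaxP s i : reflect (forall k, k < i -> nth 0 s k < nth 0 s i) (ltrmax s i).
Proof. exact: all_iotaP. Qed.

Lemma ltrmaxPn s t : ~~ ltrmax s t -> exists2 k, k < t & nth 0 s t <= nth 0 s k.
Proof.
rewrite /ltrmax -has_predC => /hasP [k]; rewrite mem_iota => /andP [_ kt] /=.
by rewrite -leqNgt; exists k.
Qed.

Lemma perm_pos t : is_perm t -> all (leq 1) t.
Proof. by move=> pt; apply/allP => x; rewrite (perm_mem pt) mem_iota; lia. Qed.

Lemma perm_mem_bound s x : is_perm s -> x \in s -> 0 < x <= size s.
Proof. by move=> ps; rewrite (perm_mem ps) mem_iota; lia. Qed.

Section PermEntries.

Variable s : seq nat.
Hypothesis ps : is_perm s.

Lemma perm_nth_bound i : i < size s -> 0 < nth 0 s i <= size s.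
Proof. by move=> i_lt; apply: perm_mem_bound => //; apply: mem_nth. Qed.

Lemma perm_nth_inj i j : i < size s -> j < size s -> nth 0 s i = nth 0 s j -> i = j.
Proof.
move=> i_lt j_lt eq_ij; apply/eqP.
by rewrite -(nth_uniq 0 i_lt j_lt) ?eq_ij // (perm_uniq ps) iota_uniq.
Qed.

Lemma perm_nth_index x : 0 < x <= size s -> exists2 i, i < size s & nth 0 s i = x.
Proof.
move=> x_bd; have xs : x \in s by rewrite (perm_mem ps) mem_iota; lia.
by exists (index x s); rewrite ?index_mem ?nth_index.
Qed.

Lemma ltrmax_size i : i < size s -> nth 0 s i = size s -> ltrmax s i.
Proof.
move=> i_lt si; apply/ltrmaxP => k ki; have k_lt : k < size s by lia.
have := perm_nth_bound k_lt; have : nth 0 s k != nth 0 s i.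
  by apply: contraTneq ki => /(perm_nth_inj k_lt i_lt) ->; rewrite ltnn.
lia.
Qed.

End PermEntries.

Lemma nth_le_last_ltrmax s i l : ltrmax s i -> i <= l ->
  (forall m, i < m <= l -> ~~ ltrmax s m) -> forall x, x <= l -> nth 0 s x <= nth 0 s i.
Proof.
move=> /ltrmaxP li; elim: l => [|l IH] il no_ltr x xl.
  have -> : x = 0 by lia.
  by have -> : i = 0 by lia.
case: (leqP i l) => [il' | li']; last first.
  by case: (ltngtP x i) => [/li/ltnW // | ix | -> //]; lia.
have IH' : forall x, x <= l -> nth 0 s x <= nth 0 s i.
  by apply: IH => // m m_bd; apply: no_ltr; lia.
case: (leqP x l) => [/IH' // | lx]; have -> : x = l.+1 by lia.
have /no_ltr /ltrmaxPn [k kl] : i < l.+1 <= l.+1 by rewrite ltnS il' leqnn.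
by move/leq_trans; apply; apply: IH'.
Qed.

(** * Non-records and right jumps *)

(* [nonrec m s] is the number of entries of [s] that are not records of
   [m :: s]; for positive entries, [nonrec 0 s] counts the non-left-to-right
   maxima of [s]. *)
Fixpoint nonrec (m : nat) (s : seq nat) : nat :=
  if s is x :: s' then (if m < x then nonrec x s' else (nonrec m s').+1) else 0.

Definition runmax (m : nat) (s : seq nat) : nat := foldl maxn m s.

Lemma runmax_cons m x s : runmax m (x :: s) = runmax (maxn m x) s.
Proof. by []. Qed.

Lemma runmax_ge m s : m <= runmax m s.
Proof. by elim: s m => [|x s IH] m //; rewrite runmax_cons; apply: leq_trans (IH _); lia. Qed.

Lemma runmax_maxn m x s : runmax (maxn m x) s = maxn (runmax m s) x.
Proof.
elim: s m => [|y s IH] m //.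
by rewrite !runmax_cons -IH; congr runmax; lia.
Qed.

Lemma runmax_lt m x s : m < x -> all (fun z => z < x) s -> runmax m s < x.
Proof.
elim: s m => [|y s IH] m // mx /andP [yx sx].
by rewrite runmax_cons; apply: IH => //; lia.
Qed.

Lemma runmax_has m x s : m < x -> x <= runmax m s -> has (leq x) s.
Proof.
elim: s m => [|y s IH] m; first by rewrite /=; lia.
rewrite runmax_cons /= => mx xs; case: (leqP x y) => //= yx.
by apply: IH xs; lia.
Qed.

Lemma nonrec_consE m x s :
  nonrec m (x :: s) = nonrec (maxn m x) s + (x <= m).
Proof. by rewrite [LHS]/=; case: ltnP => _; rewrite ?addn0 ?addn1. Qed.

Lemma nonrec_mono s m m' : m <= m' -> nonrec m s <= nonrec m' s.
Proof.
elim: s m m' => [|x s IH] m m' mm' //.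
rewrite !nonrec_consE; have := IH (maxn m x) (maxn m' x); lia.
Qed.

Lemma nonrec_cat m s1 s2 : nonrec m (s1 ++ s2) = nonrec m s1 + nonrec (runmax m s1) s2.
Proof.
elim: s1 m => [|x s1 IH] m //.
by rewrite cat_cons !nonrec_consE IH runmax_cons; lia.
Qed.

Lemma nonrec_subseq m u s : subseq u s -> nonrec m u <= nonrec m s.
Proof.
elim: s u m => [|x s IH] u m; first by rewrite subseq0 => /eqP ->.
case: u => [|y u] /=; first by [].
case: eqP => [-> | _] h; first by case: ifP => _; [apply: IH | rewrite ltnS; apply: IH].
apply: leq_trans (IH _ _ h) _.
by case: ifP => mx; [apply: nonrec_mono; apply: ltnW | apply: leqnSn].
Qed.

Lemma nonrec_iota m a n : m < a -> nonrec m (iota a n) = 0.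
Proof. by elim: n m a => [|n IH] m a //= ma; rewrite ma IH. Qed.

Lemma nonrec_move m b x c : nonrec m (b ++ x :: c) <= (nonrec m (x :: b ++ c)).+1.
Proof.
rewrite nonrec_cat [nonrec m (x :: _)]nonrec_consE [nonrec _ (x :: _)]nonrec_consE.
rewrite nonrec_cat runmax_maxn.
have := nonrec_mono b (leq_maxl m x); lia.
Qed.

Lemma nonrec0_path m t : nonrec m t = 0 -> path ltn m t.
Proof. by elim: t m => [|x t IH] m //=; case: ifP => // mx /IH ->; rewrite andbT. Qed.

Lemma nonrec_first_split m t : 0 < nonrec m t ->
  exists u x c, t = u ++ x :: c /\ x <= runmax m u.
Proof.
elim: t m => [|y t IH] m //=.
case: ifP => my; last by exists [::], y, t; split=> //=; lia.
move/IH => [u [x [c [-> xu]]]]; exists (y :: u), x, c; split=> //.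
by rewrite runmax_cons (_ : maxn m y = y) //; lia.
Qed.

Lemma rjump_cat a x b c :
  rjump (a ++ x :: b ++ c) (size a) (size a + size b) = a ++ b ++ x :: c.
Proof.
rewrite /rjump take_size_cat // (_ : size a + size b - size a = size b); last by lia.
have -> : drop (size a).+1 (a ++ x :: b ++ c) = b ++ c.
  by rewrite drop_cat ltnNge leqnSn /= subSnn /= drop0.
have -> : drop (size a + size b).+1 (a ++ x :: b ++ c) = c.
  rewrite drop_cat ltnNge (_ : size a <= (size a + size b).+1) /=; last by lia.
  by rewrite (_ : (size a + size b).+1 - size a = (size b).+1) /= ?drop_size_cat //; lia.
by rewrite nth_cat ltnn subnn take_size_cat.
Qed.

Lemma rjump_split s i j : i < j -> j < size s ->
  s = take i s ++ nth 0 s i :: take (j - i) (drop i.+1 s) ++ drop j.+1 s /\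
  rjump s i j = take i s ++ take (j - i) (drop i.+1 s) ++ nth 0 s i :: drop j.+1 s.
Proof.
move=> ij js; split=> //.
rewrite -{1}(cat_take_drop i s) (drop_nth 0); last by lia.
rewrite -{1}(cat_take_drop (j - i) (drop i.+1 s)) drop_drop.
by rewrite (_ : j - i + i.+1 = j.+1) //; lia.
Qed.

Lemma size_rjump s i j : i < j -> j < size s -> size (rjump s i j) = size s.
Proof.
move=> ij js; have [e1 e2] := rjump_split ij js.
rewrite e2 [in RHS]e1 !size_cat /= size_cat; lia.
Qed.

Lemma nonrec_rjump m s i j : i < j -> j < size s ->
  nonrec m (rjump s i j) <= (nonrec m s).+1.
Proof.
move=> ij js; have [e1 e2] := rjump_split ij js.
rewrite e2 [in X in _ <= X]e1.
move: (take i s) (take (j - i) (drop i.+1 s)) (nth 0 s i) (drop j.+1 s) => a b x c.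
rewrite (nonrec_cat m a (b ++ _)) (nonrec_cat m a (x :: _)).
have := nonrec_move (runmax m a) b x c; lia.
Qed.

Lemma nonrec_jumps k s t : jumps k s t -> nonrec 0 t <= nonrec 0 s + k.
Proof.
elim: k s => [|k IH] s /=; first by move->; rewrite addn0.
move=> [i [j [ij [js /IH]]]]; have := nonrec_rjump 0 ij js; lia.
Qed.

Lemma jumps_rjump k s t i j : jumps k s t -> i < j -> j < size t ->
  jumps k.+1 s (rjump t i j).
Proof.
elim: k s => [|k IH] s /=; first by move=> -> ij jt; exists i, j.
move=> [i' [j' [ij' [js' h]]]] ij jt.
by exists i', j'; do 2!split=> //; apply: IH.
Qed.

(* Undo a right jump: the first non-record [x] jumps back in front of the first
   entry [y > x] of the prefix, which makes [x] a record and leaves [y] one. *)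
Lemma nonrec_unjump t : uniq t -> all (leq 1) t -> 0 < nonrec 0 t ->
  exists t' i j, [/\ i < j, j < size t', perm_eq t' t,
    nonrec 0 t' = (nonrec 0 t).-1 & t = rjump t' i j].
Proof.
move=> ut tpos /nonrec_first_split [u [x [c [et xu]]]].
have x_pos : 0 < x by move/allP: tpos; apply; rewrite et mem_cat mem_head orbT.
have hu := runmax_has x_pos xu; move: et {xu}.
case/split_find: hu => y a b yx /hasPn ax; rewrite cat_rcons => et.
have {}ax : all (fun z => z < x) a by apply/allP => z /ax /=; rewrite -ltnNge.
have {}yx : x < y.
  rewrite ltn_neqAle yx andbT; apply: contraTneq ut => exy.
  by rewrite et exy -catA cat_uniq /= mem_cat mem_head !orbT !andbF.
have a_lt : runmax 0 a < x by exact: runmax_lt.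
have x_le : x <= runmax y b by apply: leq_trans (ltnW yx) (runmax_ge _ _).
exists (a ++ x :: (y :: b) ++ c), (size a), (size a + size (y :: b)); split.
- by rewrite /=; lia.
- by rewrite !size_cat /= size_cat; lia.
- by rewrite et -catA perm_cat2l -cat1s perm_catCA.
- rewrite et -catA !nonrec_cat /= (_ : runmax 0 a < y); last by lia.
  rewrite a_lt yx (_ : maxn (runmax 0 a) y = y); last by lia.
  by rewrite ltnNge x_le /= nonrec_cat; lia.
- by rewrite rjump_cat et -catA.
Qed.

Lemma jumps_nonrec m t : is_perm t -> nonrec 0 t = m -> jumps m (iota 1 (size t)) t.
Proof.
elim: m t => [|m IH] t pt tm.
  have t_sorted : sorted ltn t by case: t pt tm => // x t' _ /nonrec0_path /andP [].
  apply: (irr_sorted_eq ltn_trans ltnn (iota_ltn_sorted 1 (size t)) t_sorted).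
  by move=> z; rewrite (perm_mem pt).
have [t' [i [j [ij jt' pe t'm ->]]]] : exists t' i j, [/\ i < j, j < size t', perm_eq t' t,
    nonrec 0 t' = (nonrec 0 t).-1 & t = rjump t' i j].
  by apply: nonrec_unjump; rewrite ?perm_pos ?tm // (perm_uniq pt) iota_uniq.
rewrite size_rjump //; apply: jumps_rjump => //; apply: IH; last by rewrite t'm tm.
by rewrite /is_perm (perm_size pe) (perm_trans pe pt).
Qed.

Lemma inC_nonrec p t : is_perm t -> inC p t <-> nonrec 0 t <= p.
Proof.
move=> pt; split=> [[k [kp /nonrec_jumps]] | tp].
  by rewrite nonrec_iota // add0n => /leq_trans; apply.
by exists (nonrec 0 t); split=> //; apply: jumps_nonrec.
Qed.

Definition nonltr_count (s : seq nat) : nat := count (nonltr s) (iota 0 (size s)).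

Lemma count_nonrec m s :
  count (fun i => ~~ ((m < nth 0 s i) && ltrmax s i)) (iota 0 (size s)) = nonrec m s.
Proof.
elim: s m => [|x s IH] m //.
have shift i : ltrmax (x :: s) i.+1 = (x < nth 0 s i) && ltrmax s i.
  by rewrite /ltrmax -add1n iotaD all_cat /= andbT iota_succ all_map.
rewrite [size _]/= -[iota 0 _]/(0 :: iota 1 (size s)) iota_succ [count _ (_ :: _)]/= count_map.
rewrite (eq_count (a2 := fun i => ~~ ((maxn m x < nth 0 s i) && ltrmax s i))); last first.
  by move=> i /=; rewrite shift gtn_max -!andbA.
rewrite IH nonrec_consE /= andbT; case: ltnP => _ /=; lia.
Qed.

Lemma nonltr_countE s : all (leq 1) s -> nonltr_count s = nonrec 0 s.
Proof.
move=> spos; rewrite -count_nonrec; apply: eq_in_count => i; rewrite mem_iota => /= i_lt.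
by rewrite /nonltr i_lt (allP spos) // mem_nth.
Qed.

Lemma inC_nonltr_count p t : is_perm t -> inC p t <-> nonltr_count t <= p.
Proof. by move=> pt; rewrite nonltr_countE ?perm_pos //; apply: inC_nonrec. Qed.

Lemma nonltr_count_subseq u s : all (leq 1) s -> subseq u s ->
  nonltr_count u <= nonltr_count s.
Proof.
move=> spos us; have upos : all (leq 1) u.
  by apply/allP => x /(mem_subseq us) /(allP spos).
by rewrite !nonltr_countE //; apply: nonrec_subseq.
Qed.

Lemma ltrmax_iso u v i : order_iso u v -> i < size u -> ltrmax u i = ltrmax v i.
Proof.
move=> [_ uv] iu; apply: eq_in_all => k; rewrite mem_iota => /andP [_ ki].
by apply: uv => //; apply: ltn_trans iu.
Qed.

Lemma nonltr_count_iso u v : order_iso u v -> nonltr_count u = nonltr_count v.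
Proof.
move=> uv; rewrite /nonltr_count -uv.1; apply: eq_in_count => i.
by rewrite mem_iota /nonltr -uv.1 => /andP [_ iu] /=; rewrite iu (ltrmax_iso uv).
Qed.

Lemma perm_nth_rank u a : is_perm u -> a < size u ->
  nth 0 u a = count (fun b => nth 0 u b <= nth 0 u a) (iota 0 (size u)).
Proof.
move=> pu au; have : nth 0 u a \in iota 1 (size u) by rewrite -(perm_mem pu) mem_nth.
rewrite mem_iota => /andP [_ ua].
rewrite (_ : count _ _ = count (fun x => x <= nth 0 u a) (mkseq (nth 0 u) (size u))).
  by rewrite mkseq_nth (permP pu) count_leq_iota.
by rewrite /mkseq count_map.
Qed.

Lemma perm_order_iso_eq u v : is_perm u -> is_perm v -> order_iso u v -> u = v.
Proof.
move=> pu pv [uv iso]; apply: (@eq_from_nth _ 0) => // a au.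
rewrite (perm_nth_rank pu au) (perm_nth_rank pv (_ : a < size v)) -uv //.
apply: eq_in_count => b; rewrite mem_iota => /andP [_ bu].
by rewrite /= [LHS]leqNgt [RHS]leqNgt iso.
Qed.

(** * Deleting an entry *)

Definition delete (d : nat) (s : seq nat) : seq nat := take d s ++ drop d.+1 s.

Lemma size_delete d s : d < size s -> size (delete d s) = (size s).-1.
Proof. by move=> ds; rewrite /delete size_cat size_take size_drop ds; lia. Qed.

Lemma nth_delete d s l : d < size s ->
  nth 0 (delete d s) l = if l < d then nth 0 s l else nth 0 s l.+1.
Proof.
move=> ds; rewrite /delete nth_cat size_take ds.
by case: ifP => ld; [rewrite nth_take | rewrite nth_drop; congr nth; lia].
Qed.

Lemma delete_subseq d s : subseq (delete d s) s.
Proof.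
rewrite /delete -[X in subseq _ X](cat_take_drop d s); apply: cat_subseq => //.
by rewrite -add1n -drop_drop; apply: drop_subseq.
Qed.

Lemma subseq_delete u s : subseq u s -> size u < size s ->
  exists2 d, d < size s & subseq u (delete d s).
Proof.
elim: s u => [|x s IH] [|y u] //=; first by exists 0 => //; apply: sub0seq.
case: eqP => [-> | _] us us_lt; last by exists 0; rewrite /delete /= ?drop0.
by have [d ds ud] := IH _ us us_lt; exists d.+1; rewrite /delete /= ?eqxx.
Qed.

Lemma mask_delete d s : d < size s ->
  mask (nseq d true ++ false :: nseq (size s - d.+1) true) s = delete d s.
Proof.
move=> ds; rewrite -[X in mask _ X](cat_take_drop d s) mask_cat ?size_nseq ?size_take ?ds //.
rewrite mask_true ?size_take ?ds // (drop_nth 0) //= mask_true // size_drop; lia.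
Qed.

Lemma nth_notin_delete d s : uniq s -> d < size s -> nth 0 s d \notin delete d s.
Proof.
move=> us ds; move: us; rewrite -[X in uniq X](cat_take_drop d s) (drop_nth 0) // cat_uniq.
move=> /and3P [_ /hasPn /(_ _ (mem_head _ _)) /negPf v_take /andP [/negPf v_drop _]].
by rewrite /delete mem_cat v_take v_drop.
Qed.

Definition shift_down (v x : nat) : nat := if v < x then x.-1 else x.

Lemma shift_down_ltE v x y : x != v -> y != v ->
  (shift_down v x < shift_down v y) = (x < y).
Proof. by rewrite /shift_down => xv yv; case: ifP; case: ifP; lia. Qed.

Lemma delete_pattern s d : is_perm s -> d < size s ->
  exists2 pi, pattern pi s & order_iso (delete d s) pi.
Proof.
move=> ps ds; set v := nth 0 s d; set pi := map (shift_down v) (delete d s).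
have us : uniq s by rewrite (perm_uniq ps) iota_uniq.
have v_del : v \notin delete d s by apply: nth_notin_delete.
have in_s x : x \in delete d s -> 0 < x <= size s.
  by move/(mem_subseq (delete_subseq d s)); apply: perm_mem_bound.
have v_bd : 0 < v <= size s by apply: perm_mem_bound => //; apply: mem_nth.
have neq x : x \in delete d s -> x != v by apply: contraTneq => ->.
have iso : order_iso (delete d s) pi.
  split; first by rewrite size_map.
  move=> a b ha hb; rewrite !(nth_map 0) //.
  by rewrite shift_down_ltE //; apply: neq; apply: mem_nth.
have pi_uniq : uniq pi.
  rewrite map_inj_in_uniq ?(subseq_uniq (delete_subseq d s)) // => x y xd yd.
  by have := neq _ xd; have := neq _ yd; rewrite /shift_down; case: ifP; case: ifP; lia.
have pi_sub : {subset pi <= iota 1 (size pi)}.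
  move=> _ /mapP [x xd ->]; rewrite size_map size_delete // mem_iota.
  by have := neq _ xd; have := in_s _ xd; rewrite /shift_down; case: ifP; lia.
exists pi; last by [].
split; last by exists (nseq d true ++ false :: nseq (size s - d.+1) true); rewrite mask_delete.
apply: uniq_perm => //; first exact: iota_uniq.
by have [] := uniq_min_size pi_uniq pi_sub; rewrite ?size_iota.
Qed.

Definition ltrmax_but (s : seq nat) (d t : nat) : bool :=
  all (fun l => (l == d) || (nth 0 s l < nth 0 s t)) (iota 0 t).

(* [shadow s d] counts the entries after position [d] whose only larger
   predecessor sits at [d]: deleting [d] makes exactly them left-to-right maxima. *)
Definition shadow (s : seq nat) (d : nat) : nat :=
  count (fun t => ~~ ltrmax s t && ltrmax_but s d t) (iota d.+1 (size s - d.+1)).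

Lemma ltrmax_butP s d t : reflect (forall l, l < t -> l != d -> nth 0 s l < nth 0 s t)
  (ltrmax_but s d t).
Proof.
apply: (iffP (all_iotaP _ _)) => h l lt; last by case: eqP => //= /eqP; apply: h.
by move=> ld; have := h l lt; rewrite (negPf ld).
Qed.

Lemma ltrmax_ltrmax_but s d t : ltrmax s t -> ltrmax_but s d t.
Proof. by move=> /ltrmaxP lt; apply/ltrmax_butP => l /lt. Qed.

Lemma ltrmax_delete_lt s d l : l < d -> d < size s -> ltrmax (delete d s) l = ltrmax s l.
Proof.
move=> ld ds; apply: eq_in_all => k; rewrite mem_iota /= => kl.
by rewrite !nth_delete // ld (ltn_trans _ ld).
Qed.

Lemma ltrmax_delete_ge s d l : d <= l -> d < size s ->
  ltrmax (delete d s) l = ltrmax_but s d l.+1.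
Proof.
move=> dl ds; have del_l : nth 0 (delete d s) l = nth 0 s l.+1.
  by rewrite nth_delete // ltnNge dl.
apply/ltrmaxP/ltrmax_butP => h k kl; last first.
  by rewrite del_l nth_delete //; case: (ltnP k d) => kd; apply: h; lia.
move=> kd; case: (ltnP k d) => k_d.
  have /h : k < l by lia.
  by rewrite del_l nth_delete // k_d.
have /h : k.-1 < l by lia.
by rewrite del_l nth_delete // ifF ?prednK //; lia.
Qed.

Lemma nonltr_count_delete s d : d < size s ->
  nonltr_count s = nonltr_count (delete d s) + ~~ ltrmax s d + shadow s d.
Proof.
move=> ds; set m := size s - d.+1.
have split_s : iota 0 (size s) = iota 0 d ++ d :: iota d.+1 m.
  by rewrite -[in LHS](subnKC (ltnW ds)) iotaD add0n (_ : size s - d = m.+1) // /m; lia.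
have split_del : iota 0 (size (delete d s)) = iota 0 d ++ iota d m.
  by rewrite size_delete // -iotaD; congr iota; rewrite /m; lia.
rewrite /nonltr_count split_s split_del !count_cat [count _ (d :: _)]/= [nonltr s d]/nonltr ds.
have before : count (nonltr (delete d s)) (iota 0 d) = count (nonltr s) (iota 0 d).
  apply: eq_in_count => l; rewrite mem_iota /= => ld.
  by rewrite /nonltr size_delete // ltrmax_delete_lt //; congr (_ && _); lia.
have after : count (nonltr (delete d s)) (iota d m) =
    count (predC (ltrmax_but s d)) (iota d.+1 m).
  rewrite iota_succ count_map; apply: eq_in_count => l; rewrite mem_iota /= => dl.
  rewrite /m in dl; rewrite /nonltr size_delete // ltrmax_delete_ge //; last by lia.
  by apply: andb_idl => _; lia.
have nonltr_after : count (nonltr s) (iota d.+1 m) = count (predC (ltrmax s)) (iota d.+1 m).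
  apply: eq_in_count => l; rewrite mem_iota /= => dl.
  by rewrite /nonltr (_ : l < size s) //; rewrite /m in dl; lia.
have split_after : count (predC (ltrmax s)) (iota d.+1 m) =
    count (predC (ltrmax_but s d)) (iota d.+1 m) + shadow s d.
  rewrite (count_split_pred _ (predC (ltrmax_but s d))) /shadow.
  congr (_ + _); apply: eq_count => t /=; last by rewrite negbK andbC.
  by case: (boolP (ltrmax s t)) => [/(ltrmax_ltrmax_but d) -> | _]; rewrite ?andbT.
rewrite before after nonltr_after split_after; lia.
Qed.

Lemma shadowP s d : reflect
  (exists t, [/\ d < t, t < size s, ~~ ltrmax s t & ltrmax_but s d t]) (0 < shadow s d).
Proof.
rewrite /shadow -has_count; apply: (iffP hasP) => [[t] | [t [dt ts nt bt]]].
  by rewrite mem_iota => t_bd /andP [nt bt]; exists t; split=> //; lia.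
by exists t; rewrite ?nt ?mem_iota //; lia.
Qed.

Lemma shadow_ltrmax s d : 0 < shadow s d -> ltrmax s d.
Proof.
move=> /shadowP [t [dt _ /ltrmaxPn [k kt tk] /ltrmax_butP bt]].
have kd : k = d by apply/eqP; apply: contraTT tk => /(bt k kt); rewrite -ltnNge.
apply/ltrmaxP => l ld; rewrite kd in tk.
have : nth 0 s l < nth 0 s t by apply: bt; [lia | rewrite neq_ltn ld].
lia.
Qed.

Lemma nonltr_count_delete_nonltr s d : d < size s -> ~~ ltrmax s d ->
  nonltr_count s = (nonltr_count (delete d s)).+1.
Proof.
move=> ds nd; rewrite (nonltr_count_delete ds) nd.
suff -> : shadow s d = 0 by rewrite addn0 addn1.
by apply/eqP; rewrite -leqn0 leqNgt; apply: contra nd => /shadow_ltrmax.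
Qed.

Lemma nonltr_count_delete_lt s d : d < size s -> (ltrmax s d -> 0 < shadow s d) ->
  nonltr_count (delete d s) < nonltr_count s.
Proof. by move=> ds; rewrite (nonltr_count_delete ds); case: ltrmax => [/(_ isT)|_]; lia. Qed.

(** * The basis *)

Lemma inB_delete p s d : is_perm s -> inB p s -> d < size s ->
  nonltr_count (delete d s) <= p.
Proof.
move=> ps [_ [_ patC]] ds; have [pi pat iso] := delete_pattern ps ds.
rewrite (nonltr_count_iso iso) -inC_nonltr_count; last by case: pat.
apply: patC => // pis; have := iso.1; rewrite pis size_delete //; lia.
Qed.

Lemma proper_pattern_delete s pi : is_perm s -> pattern pi s -> pi <> s ->
  exists2 d, d < size s & nonltr_count pi <= nonltr_count (delete d s).
Proof.
move=> ps [ppi [m iso]] pis; have ms := mask_subseq m s.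
have [d ds sub] : exists2 d, d < size s & subseq (mask m s) (delete d s).
  apply: subseq_delete => //; rewrite ltn_neqAle size_subseq // andbT.
  apply/eqP => eq_size; apply: pis.
  have mask_s : mask m s = s by apply/eqP; rewrite -(size_subseq_leqif ms).2 eq_size.
  by apply/esym/perm_order_iso_eq => //; rewrite -mask_s.
exists d => //; rewrite -(nonltr_count_iso iso).
apply: nonltr_count_subseq sub; apply/allP => x /(mem_subseq (delete_subseq d s)).
exact: (allP (perm_pos ps)).
Qed.

Lemma inB_iff p s : is_perm s ->
  inB p s <-> nonltr_count s = p.+1 /\
              forall d, d < size s -> ltrmax s d -> 0 < shadow s d.
Proof.
move=> ps; split=> [sB | [sN shadows]].
  have del_le := inB_delete ps sB.
  have p_lt : p < nonltr_count s.
    by rewrite ltnNge; apply/negP => /(inC_nonltr_count p ps); case: sB => _ [].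
  have /hasP [d0] : has (nonltr s) (iota 0 (size s)).
    by rewrite has_count -/(nonltr_count s); lia.
  rewrite mem_iota => _ /andP [d0s /(nonltr_count_delete_nonltr d0s) sN0].
  have sN : nonltr_count s = p.+1 by have := del_le d0 d0s; lia.
  split=> // d ds ld; have := nonltr_count_delete ds; rewrite ld sN.
  have := del_le d ds; lia.
split=> //; split=> [/(inC_nonltr_count p ps) | pi pat pis]; first by lia.
have [d ds le_del] := proper_pattern_delete ps pat pis.
apply/(inC_nonltr_count p pat.1); apply: leq_trans le_del _.
by rewrite -ltnS -sN; apply: nonltr_count_delete_lt => //; apply: shadows.
Qed.

Lemma shadow0E s : (0 < shadow s 0) = nonltr s 1.
Proof.
apply/shadowP/idP => [[t [t_pos ts /ltrmaxPn [k kt tk] /ltrmax_butP bt]] | /andP [s1 n1]].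
  rewrite /nonltr (leq_ltn_trans t_pos ts); apply/negP => /ltrmaxP l1.
  have k0 : k = 0 by apply/eqP; apply: contraTT tk => /(bt k kt); rewrite -ltnNge.
  have := l1 0 isT; rewrite k0 in tk.
  case: (ltngtP t 1) => [| t1 | t1]; first lia; last by rewrite t1 in tk; lia.
  by have := bt 1 t1 isT; lia.
by exists 1; split=> //; apply/ltrmax_butP => l l1; rewrite (_ : l = 0) //; lia.
Qed.

Lemma shadow_next_ltrmax s i j k : i < j -> j < k -> k < size s -> ltrmax s k ->
  0 < shadow s j -> exists t, [/\ j < t, t < k, nonltr s t & nth 0 s i < nth 0 s t].
Proof.
move=> ij jk ks /ltrmaxP lk /shadowP [t [jt ts nt /ltrmax_butP bt]].
have tk : t < k.
  case: (ltngtP t k) => // [kt | tk]; last by rewrite tk in nt; move/ltrmaxP: nt.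
  case/negP: nt; apply/ltrmaxP => l lt; case: (eqVneq l j) => [-> | /(bt l lt) //].
  by have := lk j jk; have := bt k kt (negbT (gtn_eqF jk)); lia.
by exists t; split=> //; [rewrite /nonltr ts | apply: bt; lia].
Qed.

Lemma shadow_size_nonltr s d : is_perm s -> d < size s -> nth 0 s d = size s ->
  0 < shadow s d -> exists t, nth 0 s t = (size s).-1 /\ nonltr s t.
Proof.
move=> ps ds sd /shadowP [t [dt ts _ /ltrmax_butP bt]].
have [e es se] : exists2 e, e < size s & nth 0 s e = (size s).-1.
  by apply: perm_nth_index => //; lia.
have ed : e != d by apply/eqP => ed; move: se; rewrite ed sd; lia.
have st : nth 0 s t != size s by apply/eqP; rewrite -sd => /(perm_nth_inj ps ts ds); lia.
have t_bd := perm_nth_bound ps ts.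
have te : t <= e by rewrite leqNgt; apply/negP => /bt /(_ ed); lia.
exists e; split=> //; rewrite /nonltr es; apply/negP => /ltrmaxP /(_ d); lia.
Qed.

Lemma shadow_last s d : is_perm s -> d < size s -> ltrmax s d ->
  (forall m, d < m < size s -> ~~ ltrmax s m) ->
  (exists e, nth 0 s e = (size s).-1 /\ nonltr s e) -> 0 < shadow s d.
Proof.
move=> ps ds ld no_ltr [e [se /andP [es ne]]].
have sd : nth 0 s d = size s.
  have [m ms sm] : exists2 m, m < size s & nth 0 s m = size s.
    by apply: perm_nth_index => //; lia.
  have d_max : forall x, x <= (size s).-1 -> nth 0 s x <= nth 0 s d.
    by apply: nth_le_last_ltrmax => // [|l l_bd]; [lia | apply: no_ltr; lia].
  by have := d_max m; have := perm_nth_bound ps ds; lia.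
have ed : e != d by apply/eqP => ed; move: se; rewrite ed sd; lia.
have below l : l < size s -> l != d -> l != e -> nth 0 s l < (size s).-1.
  move=> ls ld' le; have := perm_nth_bound ps ls.
  have : nth 0 s l != nth 0 s d by apply: contra ld' => /eqP /(perm_nth_inj ps ls ds) ->.
  have : nth 0 s l != nth 0 s e by apply: contra le => /eqP /(perm_nth_inj ps ls es) ->.
  rewrite sd se; lia.
have de : d < e.
  rewrite ltn_neqAle eq_sym ed leqNgt; apply/negP => ed'.
  have [k ke] := ltrmaxPn ne; rewrite se; have := below k; lia.
apply/shadowP; exists e; split=> //; apply/ltrmax_butP => l le ld'.
by rewrite se; apply: below; rewrite ?neq_ltn ?le //; lia.
Qed.

Lemma shadow_gap s i d k : i < d -> ltrmax s i ->
  (forall l, i < l < d -> ~~ ltrmax s l) -> (forall l, d < l < k -> ~~ ltrmax s l) ->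
  (exists t, [/\ d < t, t < k, nonltr s t & nth 0 s i < nth 0 s t]) -> 0 < shadow s d.
Proof.
move=> id li no_ltr_before no_ltr_after [t0 [dt0 t0k /andP [t0s _] it0]].
have : exists t, (d < t) && (nth 0 s i < nth 0 s t) by exists t0; rewrite dt0 it0.
case/ex_minnP => t /andP [dt it] t_min; have tt0 : t <= t0 by apply: t_min; rewrite dt0 it0.
have i_max : forall l, l <= d.-1 -> nth 0 s l <= nth 0 s i.
  by apply: nth_le_last_ltrmax => // [|m m_bd]; [lia | apply: no_ltr_before; lia].
apply/shadowP; exists t; split=> //; first lia.
  by apply: no_ltr_after; lia.
apply/ltrmax_butP => l lt ld; apply: leq_ltn_trans it.
case: (ltngtP l d) => [l_lt | d_lt | /eqP]; [apply: i_max; lia | | by rewrite (negPf ld)].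
by rewrite leqNgt; apply: contraTN lt => il; rewrite -leqNgt t_min // d_lt.
Qed.

Lemma shadow_inner s d : 0 < d -> d < size s -> ltrmax s d ->
  (exists k, (d < k) && (k < size s) && ltrmax s k) ->
  (forall i j k, i < j -> j < k -> k < size s -> ltrmax s i -> ltrmax s j -> ltrmax s k ->
     (forall l, i < l -> l < k -> l != j -> ~~ ltrmax s l) ->
     exists t, [/\ j < t, t < k, nonltr s t & nth 0 s i < nth 0 s t]) ->
  0 < shadow s d.
Proof.
move=> d_pos ds ld /ex_minnP [k /andP [/andP [dk ks] lk] k_min] gaps.
have ex_i : exists i, (i < d) && ltrmax s i by exists 0; rewrite d_pos.
have ub_i : forall i, (i < d) && ltrmax s i -> i <= d by move=> i /andP [/ltnW].
case: (ex_maxnP ex_i ub_i) => i /andP [id li] i_max.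
have before l : i < l < d -> ~~ ltrmax s l.
  by case/andP => il ld'; apply/negP => ll; have := i_max l; rewrite ld' ll; lia.
have after l : d < l < k -> ~~ ltrmax s l.
  by case/andP => dl lk'; apply/negP => ll; have := k_min l; rewrite dl ll; lia.
apply: (shadow_gap id li before after); apply: gaps => // l il lk' ld'.
case: (ltngtP l d) ld' => [l_lt _ | d_lt _ | ->]; rewrite ?eqxx //.
  by apply: before; lia.
by apply: after; lia.
Qed.

Lemma shadows_iff s : is_perm s -> 0 < size s ->
  (forall d, d < size s -> ltrmax s d -> 0 < shadow s d) <->
  [/\ (exists t, nth 0 s t = (size s).-1 /\ nonltr s t), nonltr s 1 &
      forall i j k, i < j -> j < k -> k < size s -> ltrmax s i -> ltrmax s j -> ltrmax s k ->
        (forall l, i < l -> l < k -> l != j -> ~~ ltrmax s l) ->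
        exists t, [/\ j < t, t < k, nonltr s t & nth 0 s i < nth 0 s t]].
Proof.
move=> ps s_pos; split=> [shadows | [max_nonltr nonltr1 gaps] d ds ld].
  have [m ms sm] : exists2 m, m < size s & nth 0 s m = size s.
    by apply: perm_nth_index => //; lia.
  split.
  - by apply: (shadow_size_nonltr ps ms sm); apply: shadows => //; apply: ltrmax_size.
  - by rewrite -shadow0E; apply: shadows.
  - move=> i j k ij jk ks _ lj lk _.
    by apply: shadow_next_ltrmax => //; apply: shadows => //; lia.
have [-> | d_pos] := posnP d; first by rewrite shadow0E.
have [later | no_later] := boolP [exists k : 'I_(size s), (d < k) && ltrmax s k].
  apply: shadow_inner => //; have /existsP [k /andP [dk lk]] := later.
  by exists k; rewrite dk lk ltn_ord.
apply: shadow_last => // m /andP [dm ms]; apply/negP => lm.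
by case/existsP: no_later; exists (Ordinal ms); rewrite dm lm.
Qed.

Unset Implicit Arguments.

Theorem mainTheorem4 (p n : nat) (s : seq nat) :
  1 <= n -> size s = n -> is_perm s ->
  (inB p s <->
   [/\ (* (i) *) count (nonltr s) (iota 0 n) = p.+1,
       (* (ii) *) (exists t, nth 0 s t = n.-1 /\ nonltr s t),
       (* (iii), with 0-indexed positions *) nonltr s 1 &
       (* (iv) *)
       (forall i j k, i < j -> j < k -> k < n ->
          ltrmax s i -> ltrmax s j -> ltrmax s k ->
          (forall l, i < l -> l < k -> l != j -> ~~ ltrmax s l) ->
          exists t, [/\ j < t, t < k, nonltr s t & nth 0 s i < nth 0 s t])]).
Proof.
move=> n_pos sn ps; subst n.
rewrite -/(nonltr_count s) inB_iff // shadows_iff //.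
by split=> [[-> [? ? ?]] | [-> ? ? ?]]; split.
Qed.
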